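(* Let $G$ be a connected graph containing $t'$ pairwise vertex-disjoint triangles. Then $rc(L(G))\leq n_2-t'$, where $n_2$ is the number of vertices of $G$ of degree at least $2$. Moreover, the bound is sharp: for every positive integer $t'$ there exists a connected graph $G$ with $t'$ pairwise vertex-disjoint triangles such that $rc(L(G))=n_2-t'$.
   Context: All graphs are simple, finite and undirected. $L(G)$ is the line graph of $G$. For an edge-colouring of a graph (adjacent edges may receive the same colour), a path is rainbow if no two of its edges have the same colour; the graph is rainbow connected if every two vertices are joined by a rainbow path. The rainbow connection number $rc(H)$ of a connected graph $H$ is the smallest number of colours in an edge-colouring making $H$ rainbow connected. *)

From Stdlib Require Import ClassicalEpsilon.
From mathcomp Require Import all_boot.
Set Implicit Arguments. Unset Strict Implicit. Unset Printing Implicit Defensive.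

(* A simple graph is a symmetric irreflexive relation [e] on a finType [T]. *)

Definition connected_graph (T : finType) (e : rel T) : Prop :=
  forall x y : T, connect e x y.

Definition is_edge (T : finType) (e : rel T) (A : {set T}) : bool :=
  [exists x, exists y, e x y && (A == [set x; y])].

Definition line_vertex (T : finType) (e : rel T) : finType :=
  {A : {set T} | is_edge e A}.

Definition line_adj (T : finType) (e : rel T) : rel (line_vertex e) :=
  fun A B => (A != B) && (val A :&: val B != set0).
Arguments line_adj {T} e.

(* An edge-colouring of a graph (V, adj) with (at most) k colours:
   c u v is the colour of the edge uv; it must be symmetric and < k on edges.
   (Its values on non-edges are irrelevant.) *)
Definition edge_colouring (V : finType) (adj : rel V) (k : nat)
  (c : V -> V -> nat) : Prop :=
  forall u v, adj u v -> c u v < k /\ c u v = c v u.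

Definition rainbow_path (V : finType) (adj : rel V) (c : V -> V -> nat)
  (x y : V) (p : seq V) : Prop :=
  [/\ path adj x p, last x p = y, uniq (x :: p) & uniq (pairmap c x p)].

Definition rainbow_connected (V : finType) (adj : rel V) (c : V -> V -> nat)
  : Prop := forall x y : V, exists p, rainbow_path adj c x y p.

Definition rc_with (V : finType) (adj : rel V) (k : nat) : Prop :=
  exists c, edge_colouring adj k c /\ rainbow_connected adj c.

Definition rc_withb (V : finType) (adj : rel V) (k : nat) : bool :=
  if excluded_middle_informative (rc_with adj k) then true else false.

(* Rainbow connection number: least k with rc_with adj k
   (defined as 0 if no such k exists, i.e. for disconnected graphs). *)
Definition rc (V : finType) (adj : rel V) : nat :=
  match excluded_middle_informative (exists k, rc_withb adj k) with
  | left H => ex_minn H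
  | right _ => 0
  end.

Definition n2 (T : finType) (e : rel T) : nat :=
  #|[set v : T | 2 <= #|[set u : T | e v u]|]|.

Definition is_triangle (T : finType) (e : rel T) (A : {set T}) : Prop :=
  #|A| = 3 /\ {in A &, forall x y, x != y -> e x y}.

Definition disjoint_triangles (T : finType) (e : rel T) (t : nat)
  (tr : 'I_t -> {set T}) : Prop :=
  (forall i, is_triangle e (tr i)) /\
  (forall i j, i != j -> [disjoint tr i & tr j]).

From Stdlib Require Import ClassicalEpsilon.
From mathcomp Require Import all_boot zify.
Set Implicit Arguments. Unset Strict Implicit. Unset Printing Implicit Defensive.

(** Colour an edge of L(G), i.e. a pair of edges of G meeting at a
    vertex v, by v itself.  Along a shortest walk E_0, ..., E_k in L(G) the
    shared vertices v_i of E_i and E_(i+1) are pairwise distinct, so this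
    colouring is rainbow connected and uses only vertices of degree >= 2.  On a
    triangle {a, b, c} the colour c can be saved: a shortest walk uses at most
    two vertices of a triangle, consecutively, and the pairs meeting at a, b, c
    can be coloured with a and b alone according to the cyclic orientation of
    the triangle.  The one configuration this cannot handle, a walk starting with
    a triangle edge {v, next v} that it leaves through v (or ending symmetrically),
    is avoided by choosing, among the shortest walks, one with fewest such ends.

    For the path 0 - 1 - ... - 3t+1 with chords {3i+1, 3i+3}, the
    weight x - x/3 changes by at most 1 along an edge of G, so the total weight
    of an edge of G changes by at most 2 along an edge of L(G).  The first and
    the last edge differ in weight by 4t, so every rainbow path between them
    needs at least 2t = n_2 - t colours. *)

Lemma set2_neq (T : finType) (a b c d : T) : a != c -> a != d -> [set a; b] != [set c; d].
Proof.
move=> ac ad; apply: contraNneq (_ : a \notin [set c; d]) => [<-|]; first by rewrite set21.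
by rewrite !inE negb_or ac ad.
Qed.

Lemma set2_memE (T : finType) (a b z : T) : z \in [set a; b] -> z != a -> z = b.
Proof. by rewrite !inE => /orP [] /eqP -> //; rewrite eqxx. Qed.

Lemma val_inord n k : k <= n -> val (@inord n k) = k.
Proof. exact: inordK. Qed.

Section LineGraph.
Variables (T : finType) (e : rel T).
Hypotheses (e_sym : symmetric e) (e_irr : irreflexive e).

Local Notation L := (line_vertex e).
Local Notation ladj := (line_adj e).

Lemma line_vertexP (A : L) : exists x y, [/\ e x y, x != y & val A = [set x; y]].
Proof.
case: A => A /= /existsP [x /existsP [y /andP [exy /eqP ->]]].
by exists x, y; split => //; apply: contraTneq exy => ->; rewrite e_irr.
Qed.

Lemma line_vertex_set2 (A : L) a b :
  a \in val A -> b \in val A -> a != b -> val A = [set a; b].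
Proof.
move=> aA bA ab; have [x [y [_ xy eA]]] := line_vertexP A.
have cA : #|val A| = 2 by rewrite eA cards2 xy.
apply/eqP; rewrite eq_sym eqEcard cards2 ab cA leqnn andbT.
by apply/subsetP => z; rewrite !inE => /orP [] /eqP ->.
Qed.

Lemma line_vertex_other (A : L) z : z \in val A -> exists2 w, w != z & val A = [set z; w].
Proof.
have [x [y [_ xy ->]]] := line_vertexP A.
rewrite !inE => /orP [] /eqP ->; [exists y | exists x; rewrite 1?setUC] => //.
by rewrite eq_sym.
Qed.

Lemma line_vertex_edge (A : L) a b : a \in val A -> b \in val A -> a != b -> e a b.
Proof.
move=> aA bA ab; have [x [y [exy _ eA]]] := line_vertexP A.
move: aA bA ab; rewrite eA !inE => /orP [] /eqP -> /orP [] /eqP ->; rewrite ?eqxx //.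
by rewrite e_sym.
Qed.

Lemma line_vertex_meet_uniq (A B : L) a b : A != B ->
  a \in val A -> a \in val B -> b \in val A -> b \in val B -> a = b.
Proof.
move=> AB aA aB bA bB; apply/eqP; apply: contraNT AB => ab; apply/eqP/val_inj.
by rewrite (line_vertex_set2 aA bA ab) (line_vertex_set2 aB bB ab).
Qed.

Lemma is_edge_set2 x y : e x y -> is_edge e [set x; y].
Proof. by move=> exy; apply/existsP; exists x; apply/existsP; exists y; rewrite exy eqxx. Qed.

Definition edge_vertex x y (exy : e x y) : L := exist _ [set x; y] (is_edge_set2 exy).

Lemma line_adjP (A B : L) :
  reflect (A != B /\ exists2 x, x \in val A & x \in val B) (ladj A B).
Proof.
apply: (iffP andP) => [[-> /set0Pn [x]]|[-> [x xA xB]]].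
  by rewrite inE => /andP [xA xB]; split => //; exists x.
by split => //; apply/set0Pn; exists x; rewrite inE xA xB.
Qed.

Lemma neighbours_deg2 v u w : u != w -> e v u -> e v w -> 2 <= #|[set z | e v z]|.
Proof.
move=> uw vu vw; have <- : #|[set u; w]| = 2 by rewrite cards2 uw.
by apply: subset_leq_card; apply/subsetP => z; rewrite !inE => /orP [] /eqP ->.
Qed.

Lemma line_vertex_meet_deg2 (A B : L) v : A != B -> v \in val A -> v \in val B ->
  2 <= #|[set u | e v u]|.
Proof.
move=> AB vA vB; have [a av eA] := line_vertex_other vA.
have [b bv eB] := line_vertex_other vB.
have ab : a != b.
  apply: contraNneq av => ab; apply/eqP; apply: (line_vertex_meet_uniq AB);
    by rewrite ?eA ?eB ?ab !inE eqxx ?orbT.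
apply: (neighbours_deg2 ab).
  by apply: (line_vertex_edge vA); rewrite ?eA ?inE ?eqxx ?orbT // eq_sym.
by apply: (line_vertex_edge vB); rewrite ?eB ?inE ?eqxx ?orbT // eq_sym.
Qed.

Definition meet (A B : L) := [pick x in val A :&: val B].

Lemma meetC A B : meet A B = meet B A.
Proof. by rewrite /meet setIC. Qed.

Lemma meet_eq (A B : L) x : ladj A B -> x \in val A -> x \in val B -> meet A B = Some x.
Proof.
move=> /line_adjP [AB _] xA xB; rewrite /meet; case: pickP => [y|/(_ x)].
  by rewrite inE => /andP [yA yB]; congr Some; apply: (line_vertex_meet_uniq AB).
by rewrite inE xA xB.
Qed.

Lemma meetP (A B : L) : ladj A B ->
  exists x, [/\ meet A B = Some x, x \in val A & x \in val B].
Proof. by move=> AB; have /line_adjP [_ [x xA xB]] := AB; exists x; rewrite (meet_eq AB xA xB). Qed.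

(** A walk of length [k] in L(G) is given by its positions [X 0, ..., X k]; the
    values of [X] beyond [k] are irrelevant. *)
Definition line_walk (E F : L) k (X : nat -> L) :=
  [/\ X 0 = E, X k = F & forall i, i < k -> ladj (X i) (X i.+1)].

Definition line_geodesic E F k X :=
  line_walk E F k X /\ forall k' X', line_walk E F k' X' -> k <= k'.

Lemma line_walk_from_path x s : path e x s -> forall E F : L,
  x \in val E -> last x s \in val F -> exists k X, line_walk E F k X.
Proof.
elim: s x => [|y s IH] x /= => [_|/andP [exy ys]] E F xE sF.
  have [<-|EF] := eqVneq E F; first by exists 0, (fun _ => E).
  exists 1, (fun i => if i == 0 then E else F); split => // -[] // _.
  by apply/line_adjP; split => //; exists x.
have yB : y \in val (edge_vertex exy) := set22 _ _.
have [k [X [X0 Xk Xadj]]] := IH y ys _ F yB sF.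
have [->|EB] := eqVneq E (edge_vertex exy); first by exists k, X.
exists k.+1, (fun i => if i is i'.+1 then X i' else E); split => // -[_|i /Xadj //].
by apply/line_adjP; rewrite X0; split => //; exists x; rewrite ?inE ?eqxx.
Qed.

Lemma line_walk_exists : connected_graph e -> forall E F : L, exists k X, line_walk E F k X.
Proof.
move=> conn E F; have [x [y [_ _ eE]]] := line_vertexP E.
have [u [v [_ _ eF]]] := line_vertexP F.
have /connectP [p xp up] := conn x u.
by apply: (line_walk_from_path xp); rewrite ?eE ?eF -?up !inE eqxx.
Qed.

Definition splice (X Y : nat -> L) a l b i :=
  if i <= a then X i else if i <= a + l then Y (i - a) else X (i - (a + l) + b).

Lemma line_walk_splice E F k X a b l Y : line_walk E F k X -> a <= b -> b <= k ->
  line_walk (X a) (X b) l Y -> line_walk E F (a + l + (k - b)) (splice X Y a l b).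
Proof.
move=> [X0 Xk Xadj] ab bk [Y0 Yl Yadj].
have mid i : a <= i <= a + l -> splice X Y a l b i = Y (i - a).
  rewrite /splice => /andP [ai il]; case: ifP => ia; last by rewrite il.
  have -> : i = a by lia.
  by rewrite subnn Y0.
have high i : a + l <= i -> splice X Y a l b i = X (i - (a + l) + b).
  rewrite /splice => li; case: ifP => ia.
    have -> : i - (a + l) + b = b by lia.
    rewrite -Yl (_ : l = 0) ?Y0; [congr X | ]; lia.
  case: ifP => il //.
  have [-> ->] : i - a = l /\ i - (a + l) + b = b by lia.
  exact: Yl.
split; first by rewrite /splice leq0n.
  by rewrite high ?leq_addr // -Xk; congr X; lia.
move=> i ik; case: (leqP i.+1 a) => ia.
  by rewrite /splice ia ltnW //; apply: Xadj; lia.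
case: (leqP i.+1 (a + l)) => il.
  rewrite !mid; try lia; have -> : i.+1 - a = (i - a).+1 by lia.
  by apply: Yadj; lia.
rewrite !high; try lia; have -> : i.+1 - (a + l) + b = (i - (a + l) + b).+1 by lia.
by apply: Xadj; lia.
Qed.

Lemma line_walk_set E F k X i (B : L) : line_walk E F k X -> 0 < i < k ->
  ladj (X i.-1) B -> ladj B (X i.+1) -> line_walk E F k (fun n => if n == i then B else X n).
Proof.
move=> [X0 Xk Xadj] /andP [i0 ik] h1 h2; split.
- by rewrite ifN_eq // eq_sym -lt0n.
- by rewrite ifN_eq // neq_ltn ik orbT.
move=> n nk; case: ifP => [/eqP ni | _].
  by rewrite ni ifN_eq // neq_ltn ltnSn orbT.
by case: ifP => [/eqP ni | _]; [rewrite -ni in h1 | apply: Xadj].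
Qed.

Section Geodesic.
Variables (E F : L) (k : nat) (X : nat -> L).
Hypothesis X_geo : line_geodesic E F k X.

Lemma geodesic_splice_le a b l Y : a <= b -> b <= k ->
  line_walk (X a) (X b) l Y -> b - a <= l.
Proof.
move=> ab bk Yw; have := X_geo.2 _ _ (line_walk_splice X_geo.1 ab bk Yw); lia.
Qed.

Lemma geodesic_neq a b : a < b -> b <= k -> X a != X b.
Proof.
move=> ab bk; apply/eqP => Xab.
have : b - a <= 0.
  by apply: (geodesic_splice_le (l := 0) (Y := fun _ => X a) (ltnW ab) bk); split.
lia.
Qed.

Lemma geodesic_nonadj a b : a.+2 <= b -> b <= k -> ~~ ladj (X a) (X b).
Proof.
move=> ab bk; apply/negP => Xab.
have : b - a <= 1.
  apply: (geodesic_splice_le (Y := fun i => if i == 0 then X a else X b) _ bk).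
    lia.
  by split => // -[].
lia.
Qed.

Lemma geodesic_no_common_adj a b (B : L) : a.+3 <= b -> b <= k ->
  ladj (X a) B -> ladj B (X b) -> False.
Proof.
move=> ab bk aB Bb.
have : b - a <= 2.
  apply: (geodesic_splice_le
    (Y := fun i => if i == 0 then X a else if i == 1 then B else X b) _ bk).
    lia.
  by split => // -[|[]].
lia.
Qed.

Lemma geodesic_disjoint a b x : a.+2 <= b -> b <= k ->
  x \in val (X a) -> x \notin val (X b).
Proof.
move=> ab bk xa; apply: contraNN (geodesic_nonadj ab bk) => xb.
by apply/line_adjP; split; [apply: geodesic_neq => //; lia | exists x].
Qed.

Lemma geodesic_far_nonedge a b x y : a.+3 <= b -> b <= k ->
  x \in val (X a) -> y \in val (X b) -> ~~ e x y.
Proof.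
move=> ab bk xa yb; apply/negP => exy.
have yna : y \notin val (X a).
  by apply: contraTN yb => ya; apply: (geodesic_disjoint (a := a)) => //; lia.
have xnb : x \notin val (X b) by apply: geodesic_disjoint => //; lia.
have xB : x \in val (edge_vertex exy) := set21 _ _.
have yB : y \in val (edge_vertex exy) := set22 _ _.
apply: (geodesic_no_common_adj (B := edge_vertex exy) ab bk); apply/line_adjP; split.
- by apply: contraNneq yna => ->.
- by exists x.
- by apply: contraNneq xnb => <-.
- by exists y.
Qed.

End Geodesic.

Lemma line_walk_rainbow (c : L -> L -> nat) E F k X : line_walk E F k X ->
  (forall a b, a < b -> b <= k -> X a != X b) ->
  (forall a b, a < b -> b < k -> c (X a) (X a.+1) != c (X b) (X b.+1)) ->
  rainbow_path ladj c E F (mkseq (fun i => X i.+1) k).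
Proof.
move=> [X0 Xk Xadj] Xinj cinj.
have nthX i : i <= k -> nth E (E :: mkseq (fun j => X j.+1) k) i = X i.
  by case: i => [|i] //= ik; rewrite nth_mkseq.
split.
- apply/(pathP E) => i; rewrite size_mkseq => ik.
  by rewrite nthX ?nth_mkseq //; [apply: Xadj | apply: ltnW].
- by rewrite (last_nth E) size_mkseq nthX.
- apply/(uniqPn E) => -[a [b [ab]]]; rewrite /= size_mkseq ltnS => bk.
  by rewrite !nthX //; [apply/eqP/Xinj | exact: ltnW (leq_trans ab bk)].
- apply/(uniqPn 0) => -[a [b [ab]]]; rewrite size_pairmap size_mkseq => bk.
  have ak : a < k by apply: ltn_trans bk.
  rewrite !(nth_pairmap E) ?size_mkseq // !nthX ?(ltnW ak) ?(ltnW bk) // !nth_mkseq //.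
  exact/eqP/cinj.
Qed.

End LineGraph.

Section TriangleCycle.
Variables (T : finType) (A : {set T}).
Hypothesis A3 : #|A| = 3.

Definition tri_next v := next (enum A) v.

Lemma tri_nextP v : v \in A -> exists b d,
  [/\ A = [set v; b; d], uniq [:: v; b; d],
      tri_next v = b, tri_next b = d & tri_next d = v].
Proof.
rewrite /tri_next -mem_enum; have := enum_uniq (mem A).
have : size (enum A) = 3 by rewrite -cardE.
have eA w : (w \in A) = (w \in enum A) by rewrite mem_enum.
case: (enum A) eA => [|a [|b [|d [|]]]] // eA _ u.
have {}eA : A = [set a; b; d] by apply/setP => w; rewrite eA !inE orbA.
move: (u); rewrite /= !inE negb_or andbT => /andP [/andP [ab ad] bd].
have [ba da db] : [/\ b != a, d != a & d != b] by rewrite !(eq_sym _ a) (eq_sym d).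
move=> /or3P [] /eqP ->; [exists b, d | exists d, a | exists a, b];
  rewrite !inE !negb_or !eqxx ?ab ?ad ?bd ?ba ?da ?db ?(negbTE ab) ?(negbTE ad)
  ?(negbTE bd) ?(negbTE ba) ?(negbTE da) ?(negbTE db); split => //.
all: apply/setP => w; rewrite eA !inE; by case: (w == a); case: (w == b); case: (w == d).
Qed.

Lemma tri_next_in v : v \in A -> tri_next v \in A.
Proof. by move=> /tri_nextP [b [d [-> _ -> _ _]]]; rewrite !inE eqxx !orbT. Qed.

Lemma tri_next_neq v : v \in A -> tri_next v != v.
Proof.
by move=> /tri_nextP [b [d [_ /= u -> _ _]]]; move: u; rewrite !inE eq_sym => /andP [/norP []].
Qed.

Lemma tri_next3 v : v \in A -> tri_next (tri_next (tri_next v)) = v.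
Proof. by move=> /tri_nextP [b [d [_ _ -> -> ->]]]. Qed.

Lemma tri_next2_neq v : v \in A -> tri_next (tri_next v) != v.
Proof.
move=> vA; apply: contra_neq (tri_next_neq vA) => nnv.
by rewrite -{2}(tri_next3 vA) nnv.
Qed.

Lemma tri_memE v w : v \in A -> w \in A ->
  [\/ w = v, w = tri_next v | w = tri_next (tri_next v)].
Proof.
move=> /tri_nextP [b [d [-> _ -> -> _]]].
by rewrite !inE -orbA => /or3P [] /eqP ->; [apply: Or31 | apply: Or32 | apply: Or33].
Qed.

End TriangleCycle.

Section Colouring.
Variables (T : finType) (e : rel T).
Hypotheses (e_sym : symmetric e) (e_irr : irreflexive e).
Variables (t : nat) (tr : 'I_t -> {set T}).
Hypothesis tr_disj : disjoint_triangles e tr.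

Local Notation L := (line_vertex e).
Local Notation ladj := (line_adj e).
Local Notation nxt m := (tri_next (tr m)).
Local Notation prv m v := (nxt m (nxt m v)).

Lemma card_tr m : #|tr m| = 3. Proof. by case: (tr_disj.1 m). Qed.

Lemma tr_edge m : {in tr m &, forall x y, x != y -> e x y}.
Proof. by case: (tr_disj.1 m). Qed.

Lemma tr_index_uniq m m' v : v \in tr m -> v \in tr m' -> m = m'.
Proof.
move=> vm vm'; apply/eqP; apply: contraT => mm'.
by rewrite (disjointFr (tr_disj.2 _ _ mm') vm) in vm'.
Qed.

Lemma tri_next_facts m v : v \in tr m ->
  [/\ nxt m v \in tr m, prv m v \in tr m, v != nxt m v, v != prv m v & nxt m v != prv m v].
Proof.
move=> vm; have c3 := card_tr m; have nm := tri_next_in c3 vm.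
split; rewrite ?tri_next_in //.
- by rewrite eq_sym tri_next_neq.
- by rewrite eq_sym tri_next2_neq.
- by rewrite eq_sym tri_next_neq.
Qed.

Definition tri_of v := [pick m | v \in tr m].

Lemma tri_of_in v m : tri_of v = Some m -> v \in tr m.
Proof. by rewrite /tri_of; case: pickP => // m' vm [<-]. Qed.

Lemma tri_ofE v m : v \in tr m -> tri_of v = Some m.
Proof.
rewrite /tri_of => vm; case: pickP => [m' vm'|/(_ m)]; last by rewrite vm.
by rewrite (tr_index_uniq vm' vm).
Qed.

Definition big_deg := [set v | 2 <= #|[set u | e v u]|].
Definition dropped :=
  [set v | [exists m, (v \in tr m) && (index v (enum (tr m)) == 2)]].
Definition palette := big_deg :\: dropped.
Definition hue u := index u (enum palette).

Lemma hue_lt u : u \in palette -> hue u < #|palette|.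
Proof. by move=> uP; rewrite /hue cardE index_mem mem_enum. Qed.

Lemma hue_inj u u' : u \in palette -> u' \in palette -> hue u = hue u' -> u = u'.
Proof. by move=> uP u'P; apply: (index_inj u); rewrite mem_enum. Qed.

Lemma tr_big_deg m v : v \in tr m -> v \in big_deg.
Proof.
move=> vm; have [nm pm vn vp np] := tri_next_facts vm.
by rewrite inE (neighbours_deg2 np) // (tr_edge vm).
Qed.

Lemma card_palette : #|palette| <= n2 e - t.
Proof.
have drop_big : dropped \subset big_deg.
  by apply/subsetP => v; rewrite inE => /existsP [m /andP [/tr_big_deg]].
rewrite /palette (cardsDS drop_big) /n2 -/big_deg.
suff : t <= #|dropped| by lia.
case: (posnP t) => [->|t_gt0] //.
have [x0 _] : exists x0, x0 \in tr (Ordinal t_gt0).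
  by apply/set0Pn; rewrite -card_gt0 card_tr.
pose third m := nth x0 (enum (tr m)) 2.
have third_in m : third m \in tr m by rewrite -mem_enum mem_nth // -cardE card_tr.
have third_inj : injective third.
  by move=> m m' eq_m; apply: (tr_index_uniq (third_in m)); rewrite eq_m third_in.
rewrite -{1}[t]card_ord -(card_imset (mem 'I_t) third_inj).
apply: subset_leq_card; apply/subsetP => z /imsetP [m _ ->].
rewrite inE; apply/existsP; exists m.
by rewrite third_in index_uniq ?enum_uniq // -cardE card_tr.
Qed.

Lemma corner_palette m v i : v \in tr m -> i < 2 -> nth v (enum (tr m)) i \in palette.
Proof.
move=> vm i2; have im : nth v (enum (tr m)) i \in tr m.
  by rewrite -mem_enum mem_nth // -cardE card_tr; lia.
rewrite in_setD (tr_big_deg im) andbT inE.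
apply/existsP => -[m' /andP [im' /eqP idx]]; have em := tr_index_uniq im im'; subst m'.
by move: idx; rewrite index_uniq ?enum_uniq // -?cardE ?card_tr //; lia.
Qed.

Lemma corner_default m v w i : i < 3 -> nth v (enum (tr m)) i = nth w (enum (tr m)) i.
Proof. by move=> i3; apply: set_nth_default; rewrite -cardE card_tr. Qed.

Lemma hue_corner_neq m v : v \in tr m ->
  hue (nth v (enum (tr m)) 1) != hue (nth v (enum (tr m)) 0).
Proof.
move=> vm; have c0 := corner_palette vm (isT : 0 < 2).
have c1 := corner_palette vm (isT : 1 < 2).
apply/eqP => /(hue_inj c1 c0) /(congr1 (index^~ (enum (tr m)))).
by rewrite !index_uniq ?enum_uniq // -cardE card_tr.
Qed.

Definition vertex_colour v (A B : L) : nat :=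
  if tri_of v is Some m then
    if [&& (val A == [set v; prv m v]) || (val B == [set v; prv m v]),
           val A != [set v; nxt m v] & val B != [set v; nxt m v]]
    then hue (nth v (enum (tr m)) 1) else hue (nth v (enum (tr m)) 0)
  else hue v.

Definition line_colour (A B : L) := if meet A B is Some v then vertex_colour v A B else 0.

Definition vclass v : {set T} := if tri_of v is Some m then tr m else [set v].

Lemma vertex_colourC v A B : vertex_colour v A B = vertex_colour v B A.
Proof. by rewrite /vertex_colour; case: (tri_of v) => // m; rewrite orbC [(_ != _) && _]andbC. Qed.

Lemma vertex_colour_hue v (A B : L) : A != B -> v \in val A -> v \in val B ->
  exists2 u, vertex_colour v A B = hue u & u \in palette :&: vclass v.
Proof.
move=> AB vA vB; rewrite /vertex_colour /vclass; case tv: (tri_of v) => [m|].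
  have vm := tri_of_in tv.
  by case: ifP => _; [exists (nth v (enum (tr m)) 1) | exists (nth v (enum (tr m)) 0)];
    rewrite // inE corner_palette // -mem_enum mem_nth // -cardE card_tr.
exists v => //; rewrite inE set11 andbT /palette /big_deg /dropped !inE.
rewrite (line_vertex_meet_deg2 e_sym e_irr AB vA vB) andbT.
apply/existsP => -[m /andP [vm _]]; by rewrite (tri_ofE vm) in tv.
Qed.

Lemma line_colour_hue (A B : L) : ladj A B -> exists x, [/\ meet A B = Some x,
  x \in val A, x \in val B & exists2 u, line_colour A B = hue u & u \in palette :&: vclass x].
Proof.
move=> AB; have [x [mx xA xB]] := meetP e_irr AB; exists x; split => //.
by rewrite /line_colour mx; apply: vertex_colour_hue => //; case/andP: AB.
Qed.

Lemma line_colour_edge_colouring : edge_colouring ladj #|palette| line_colour.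
Proof.
move=> A B AB; split; last by rewrite /line_colour meetC; case: meet => // x; rewrite vertex_colourC.
by have [_ [_ _ _ [u -> /setIP [uP _]]]] := line_colour_hue AB; apply: hue_lt.
Qed.

Lemma vclass_common x y u : x != y -> u \in vclass x -> u \in vclass y ->
  exists m, x \in tr m /\ y \in tr m.
Proof.
rewrite /vclass; case tx: (tri_of x) => [m|]; case ty: (tri_of y) => [m'|].
- move=> _ um um'; rewrite (tr_index_uniq um um') in tx.
  by exists m'; rewrite !tri_of_in.
- by move=> _ um /set1P eu; rewrite eu in um; rewrite (tri_ofE um) in ty.
- by move=> _ /set1P eu um; rewrite eu in um; rewrite (tri_ofE um) in tx.
- by move=> xy /set1P -> /set1P eu; rewrite eu eqxx in xy.
Qed.

(** When two consecutive pairs of a walk, meeting at the triangle vertices [v]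
    and [w], get the same colour, the walk enters the triangle backwards at [v]
    or leaves it forwards at [w]. *)
Lemma vertex_colour_clash m v w (A B C : L) : v \in tr m -> w \in tr m -> v != w ->
  val B = [set v; w] -> vertex_colour v A B = vertex_colour w B C ->
  (w = prv m v /\ val A = [set v; nxt m v]) \/ (w = nxt m v /\ val C = [set w; nxt m w]).
Proof.
have c3 := card_tr m.
move=> vm wm vw eB; rewrite /vertex_colour (tri_ofE vm) (tri_ofE wm) eB.
rewrite -[nth w _ 0](corner_default _ v) // -[nth w _ 1](corner_default _ v) //.
have hue_neq := hue_corner_neq vm.
have [nm pm vn vp np] := tri_next_facts vm; have n3 := tri_next3 c3 vm.
have pv : prv m v != v by rewrite eq_sym.
have pn : prv m v != nxt m v by rewrite eq_sym.
have [wv|->|->] := tri_memE c3 vm wm; first by rewrite wv eqxx in vw.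
- rewrite n3 eqxx !andbF [[set nxt m v; v]]setUC eqxx set2_neq //=.
  by case: eqP => [eC _|_]; [right; split | move/eqP; rewrite eq_sym (negbTE hue_neq)].
- rewrite n3 eqxx orbT [[set prv m v; v]]setUC eqxx andbF /=.
  rewrite [[set v; prv m v]]setUC set2_neq ?andbT //.
  by case: eqP => [eA _|_]; [left; split | move/eqP; rewrite (negbTE hue_neq)].
Qed.

Definition is_tail (A : L) v := [exists m, (val A \subset tr m) && (val A == [set v; nxt m v])].

Definition tail_at (A : L) (o : option T) := if o is Some v then is_tail A v else false.

(** The colouring can fail only at the ends of a walk counted here, so optimal
    walks minimise this number. *)
Definition end_tails (X : nat -> L) k :=
  tail_at (X 0) (meet (X 0) (X 1)) + tail_at (X k) (meet (X k.-1) (X k)).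

Lemma is_tailE m (A : L) v : val A \subset tr m -> is_tail A v = (val A == [set v; nxt m v]).
Proof.
move=> Am; apply/existsP/idP => [[m' /andP [Am' eA]] | eA]; last by exists m; rewrite Am.
have [x [y [_ _ eA']]] := line_vertexP e_irr A.
have xA : x \in val A by rewrite eA' set21.
by rewrite -(tr_index_uniq (subsetP Am' x xA) (subsetP Am x xA)).
Qed.

Lemma optimal_walk_exists : connected_graph e -> forall E F : L, exists k X,
  line_geodesic E F k X /\ forall X', line_walk E F k X' -> end_tails X k <= end_tails X' k.
Proof.
move=> conn E F.
pose Q n := exists k X, line_walk E F k X /\ 3 * k + end_tails X k = n.
pose q n := if excluded_middle_informative (Q n) then true else false.
have qP n : reflect (Q n) (q n) by rewrite /q; case: excluded_middle_informative; constructor.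
have exq : exists n, q n.
  have [k [X Xw]] := line_walk_exists e_irr conn E F.
  by exists (3 * k + end_tails X k); apply/qP; exists k, X.
case: (ex_minnP exq) => _ /qP [k [X [Xw <-]]] Xmin.
have {}Xmin k' X' : line_walk E F k' X' -> 3 * k + end_tails X k <= 3 * k' + end_tails X' k'.
  by move=> X'w; apply: Xmin; apply/qP; exists k', X'.
have tails2 Y j : end_tails Y j <= 2 by rewrite /end_tails; case: tail_at; case: tail_at.
exists k, X; split => [|X' /Xmin]; last lia.
by split => // k' X' /Xmin; have := tails2 X' k'; lia.
Qed.

Section OptimalWalk.
Variables (E F : L) (k : nat) (X : nat -> L).
Hypothesis X_geo : line_geodesic E F k X.
Hypothesis X_opt : forall X', line_walk E F k X' -> end_tails X k <= end_tails X' k.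

Let X_adj i : i < k -> ladj (X i) (X i.+1).
Proof. by case: X_geo => -[_ _ adj] _; apply: adj. Qed.

Lemma far_triangle_vertices m i j x y : i.+3 <= j -> j <= k ->
  x \in val (X i) -> y \in val (X j) -> x \in tr m -> y \in tr m -> False.
Proof.
move=> ij jk xi yj xm ym; apply: (negP (geodesic_far_nonedge X_geo ij jk xi yj)).
have xj : x \notin val (X j) by apply: (geodesic_disjoint X_geo (a := i)) => //; lia.
by apply: (tr_edge xm ym); apply: contraNneq xj => ->.
Qed.

Lemma no_tail_start m x : 1 < k -> x \in tr m ->
  val (X 0) = [set x; nxt m x] -> val (X 1) = [set x; prv m x] -> prv m x \in val (X 2) ->
  False.
Proof.
move=> k1 xm X0E X1E pX2; have [nm pm xn xp np] := tri_next_facts xm.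
pose B := edge_vertex (tr_edge nm pm np).
have xX0 : x \in val (X 0) by rewrite X0E set21.
have nX0 : nxt m x \in val (X 0) by rewrite X0E set22.
have nB : nxt m x \in val B := set21 _ _.
have pB : prv m x \in val B := set22 _ _.
have X0B : ladj (X 0) B.
  apply/line_adjP; split; last by exists (nxt m x).
  by apply: contraTneq xX0 => ->; rewrite !inE negb_or xn xp.
have BX2 : ladj B (X 2).
  apply/line_adjP; split; last by exists (prv m x).
  by apply: contraTneq nB => ->; apply: (geodesic_disjoint X_geo (a := 0)).
have := X_opt (line_walk_set X_geo.1 (k1 : 0 < 1 < k) X0B BX2); rewrite /end_tails /=.
have X0m : val (X 0) \subset tr m by rewrite X0E subUset !sub1set xm nm.
rewrite (meet_eq e_irr X0B nX0 nB) (meet_eq e_irr (X_adj (ltnW k1)) xX0) ?X1E ?inE ?eqxx //.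
have X0nt : ([set x; nxt m x] == [set nxt m x; prv m x]) = false by apply/negbTE/set2_neq.
rewrite /= !(is_tailE _ X0m) X0E eqxx X0nt ifN_eq ?neq_ltn ?k1 ?orbT //.
case: eqP => [k2 | _]; last by rewrite add0n ltnn.
have -> : k = 2 by rewrite -(prednK (ltnW k1)) k2.
have pX1 : prv m x \in val (X 1) by rewrite X1E set22.
by rewrite /= (meet_eq e_irr BX2 pB pX2) (meet_eq e_irr (X_adj k1) pX1 pX2) add0n ltnn.
Qed.

Lemma no_tail_end m x a : k = a.+2 -> x \in tr m -> x \in val (X a) ->
  val (X a.+1) = [set x; nxt m x] -> val (X a.+2) = [set nxt m x; prv m x] -> False.
Proof.
move=> ka xm xXa X1E X2E; have [nm pm xn xp np] := tri_next_facts xm.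
pose B := edge_vertex (tr_edge xm pm xp).
have xB : x \in val B := set21 _ _.
have pB : prv m x \in val B := set22 _ _.
have xX1 : x \in val (X a.+1) by rewrite X1E set21.
have nX1 : nxt m x \in val (X a.+1) by rewrite X1E set22.
have nX2 : nxt m x \in val (X a.+2) by rewrite X2E set21.
have pX2 : prv m x \in val (X a.+2) by rewrite X2E set22.
have XaB : ladj (X a) B.
  apply/line_adjP; split; last by exists x.
  apply: contraTneq pX2 => XaBe; have pXa : prv m x \in val (X a) by rewrite XaBe.
  by apply: (geodesic_disjoint X_geo (a := a)); rewrite ?ka.
have BX2 : ladj B (X a.+2).
  apply/line_adjP; split; last by exists (prv m x).
  by apply: contraTneq xB => ->; apply: (geodesic_disjoint X_geo (a := a)); rewrite ?ka.
have ak : 0 < a.+1 < k by rewrite ka ltnSn.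
have a1k : a.+1 < k by rewrite ka.
have X2m : val (X a.+2) \subset tr m by rewrite X2E subUset !sub1set nm pm.
have X2nt : ([set nxt m x; prv m x] == [set prv m x; x]) = false.
  by apply/negbTE/set2_neq; rewrite // tri_next_neq ?card_tr.
have := X_opt (line_walk_set X_geo.1 ak XaB BX2); rewrite /end_tails ka /=.
rewrite eqxx (gtn_eqF (ltnSn a.+1)) (meet_eq e_irr BX2 pB pX2) (meet_eq e_irr (X_adj a1k) nX1 nX2).
rewrite /= !(is_tailE _ X2m) X2E eqxx tri_next3 ?card_tr // X2nt addn0 addn1.
case: eqP => [[a0]|_]; last by rewrite ltnn.
subst a; by rewrite (meet_eq e_irr XaB xXa xB) (meet_eq e_irr (X_adj (ltnW a1k)) xXa xX1) ltnn.
Qed.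

Lemma backward_clash m x a : a.+1 < k -> x \in tr m ->
  val (X a) = [set x; nxt m x] -> val (X a.+1) = [set x; prv m x] ->
  prv m x \in val (X a.+2) -> False.
Proof.
case: a => [|a] a1k xm XaE Xa1E pXa2; first exact: no_tail_start a1k xm XaE Xa1E pXa2.
have [z [_ zXa zXa1]] := meetP e_irr (X_adj (ltnW (ltnW a1k))).
have xXa2 : x \in val (X a.+2) by rewrite Xa1E set21.
have zx : z != x.
  apply: contraTneq xXa2 => <-; apply: (geodesic_disjoint X_geo (a := a)) => //.
  exact: ltnW.
have zm : z \in tr m.
  by rewrite (@set2_memE _ x (nxt m x) z) ?tri_next_in ?card_tr // -XaE.
have pm := tri_next_in (card_tr m) (tri_next_in (card_tr m) xm).
exact: (far_triangle_vertices (i := a) (j := a.+3) (leqnn _) a1k zXa pXa2 zm pm).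
Qed.

Lemma forward_clash m x a : a.+1 < k -> x \in tr m -> x \in val (X a) ->
  val (X a.+1) = [set x; nxt m x] -> val (X a.+2) = [set nxt m x; prv m x] -> False.
Proof.
move=> a1k xm xXa Xa1E Xa2E; case: (ltnP a.+2 k) => a2k; last first.
  by apply: (no_tail_end _ xm xXa Xa1E Xa2E); apply/eqP; rewrite eqn_leq a2k.
have [z [_ zXa2 zXa3]] := meetP e_irr (X_adj a2k).
have nXa1 : nxt m x \in val (X a.+1) by rewrite Xa1E set22.
have zn : z != nxt m x.
  by apply: contraTneq zXa3 => ->; apply: (geodesic_disjoint X_geo (a := a.+1)).
have zm : z \in tr m.
  by rewrite (@set2_memE _ (nxt m x) (prv m x) z) ?tri_next_in ?card_tr // -Xa2E.
exact: (far_triangle_vertices (i := a) (j := a.+3) (leqnn _) a2k xXa zXa3 xm zm).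
Qed.

Lemma optimal_walk_colours a b : a < b -> b < k ->
  line_colour (X a) (X a.+1) != line_colour (X b) (X b.+1).
Proof.
move=> ab bk; apply/eqP => same; have ak := ltn_trans ab bk.
have [x [mx xa xa1 [u cu /setIP [uP ux]]]] := line_colour_hue (X_adj ak).
have [y [my yb yb1 [u' cu' /setIP [u'P uy]]]] := line_colour_hue (X_adj bk).
have uu' : u = u' by apply: hue_inj; rewrite // -cu -cu'.
subst u'.
have xy : x != y.
  by apply: contraTneq yb1 => <-; apply: (geodesic_disjoint X_geo (a := a)).
have [m [xm ym]] := vclass_common xy ux uy.
have b1 : b = a.+1.
  apply/eqP; rewrite eqn_leq ab andbT; apply: contraT; rewrite -ltnNge => ab2.
  by case: (far_triangle_vertices (i := a) (j := b.+1) ab2 bk xa yb1 xm ym).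
subst b; have Xa1E := line_vertex_set2 e_irr xa1 yb xy.
have clash : vertex_colour x (X a) (X a.+1) = vertex_colour y (X a.+1) (X a.+2).
  by move: same; rewrite /line_colour mx my.
have [[ey XaE] | [ey Xa2E]] := vertex_colour_clash xm ym xy Xa1E clash; subst y.
- exact: backward_clash bk xm XaE Xa1E yb1.
- exact: forward_clash bk xm xa Xa1E Xa2E.
Qed.

End OptimalWalk.

Lemma rc_with_palette : connected_graph e -> rc_with ladj #|palette|.
Proof.
move=> conn; exists line_colour; split; first exact: line_colour_edge_colouring.
move=> E F; have [k [X [X_geo X_opt]]] := optimal_walk_exists conn E F.
exists (mkseq (fun i => X i.+1) k).
exact: line_walk_rainbow X_geo.1 (geodesic_neq X_geo) (optimal_walk_colours X_geo X_opt).
Qed.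

End Colouring.

Lemma rc_withbE (V : finType) (adj : rel V) k : rc_withb adj k <-> rc_with adj k.
Proof. by rewrite /rc_withb; case: excluded_middle_informative. Qed.

Lemma rc_leq (V : finType) (adj : rel V) k : rc_with adj k -> rc adj <= k.
Proof.
rewrite /rc => hk; case: excluded_middle_informative => [ex|] //.
by case: (ex_minnP ex) => n _; apply; apply/rc_withbE.
Qed.

Lemma rc_geq (V : finType) (adj : rel V) k : (exists K, rc_with adj K) ->
  (forall K, rc_with adj K -> k <= K) -> k <= rc adj.
Proof.
move=> [K0 hK0] lower; rewrite /rc; case: excluded_middle_informative => [ex|[]].
  by case: (ex_minnP ex) => n /rc_withbE /lower.
by exists K0; apply/rc_withbE.
Qed.

Lemma rainbow_path_size (V : finType) (adj : rel V) K c x y p :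
  edge_colouring adj K c -> rainbow_path adj c x y p -> size p <= K.
Proof.
move=> c_col [xp _ _ c_uniq]; rewrite -(size_pairmap c x) -(size_iota 0 K).
apply: uniq_leq_size => // n; rewrite mem_iota /=.
elim: p x xp {c_uniq} => [|z p IH] x //= /andP [xz zp].
by rewrite inE => /orP [/eqP -> | /(IH _ zp)]; [exact: (c_col _ _ xz).1 | ].
Qed.

Section Example.
Variable t : nat.

(** The path [0 - 1 - ... - 3t+1] with the chords [{3i+1, 3i+3}], which close the
    triangles [{3i+1, 3i+2, 3i+3}]. *)
Definition ex_step (a b : nat) := (a.+1 == b) || ((a %% 3 == 1) && (b == a + 2)).
Definition ex_adj : rel 'I_(3 * t).+2 := fun x y => ex_step x y || ex_step y x.
Definition ex_tr (i : 'I_t) : {set 'I_(3 * t).+2} :=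
  [set inord (3 * i + 1); inord (3 * i + 2); inord (3 * i + 3)].

Lemma ex_adj_sym : symmetric ex_adj.
Proof. by move=> x y; rewrite /ex_adj orbC. Qed.

Lemma ex_adj_irr : irreflexive ex_adj.
Proof. by move=> x; rewrite /ex_adj /ex_step; apply/negP; lia. Qed.

Lemma ex_adj_connected : connected_graph ex_adj.
Proof.
have from0 (x : 'I_(3 * t).+2) : connect ex_adj ord0 x.
  case: x => x; elim: x => [|x IH] x_lt; first by rewrite (_ : Ordinal x_lt = ord0) //; apply: val_inj.
  apply: connect_trans (IH (ltnW x_lt)) (connect1 _).
  by rewrite /ex_adj /ex_step /= eqxx.
by move=> x y; apply: connect_trans (from0 y); rewrite (sym_connect_sym ex_adj_sym).
Qed.

Lemma mem_ex_tr i (x : 'I_(3 * t).+2) : (x \in ex_tr i) = (3 * i < x <= 3 * i + 3).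
Proof. by have it := ltn_ord i; rewrite !inE -!val_eqE !val_inord /=; lia. Qed.

Lemma ex_triangles : disjoint_triangles ex_adj ex_tr.
Proof.
split=> [i|i j]; last first.
  rewrite -(inj_eq val_inj) /= => ij; rewrite -setI_eq0; apply/eqP/setP => x.
  by rewrite in_setI !mem_ex_tr inE; lia.
have it := ltn_ord i; split.
  by rewrite /ex_tr setUC cardsU1 cards2 !inE -!val_eqE !val_inord /=; lia.
move=> x y; rewrite !mem_ex_tr /ex_adj /ex_step -(inj_eq val_inj) /=; lia.
Qed.

Lemma ex_deg2 (v : 'I_(3 * t).+2) : (2 <= #|[set u | ex_adj v u]|) = (0 < v < (3 * t).+1).
Proof.
have v_lt := ltn_ord v.
case: (boolP (0 < v < (3 * t).+1)) => [/andP [v0 vt] | v_end].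
  apply: (@leq_trans #|[set inord v.-1; @inord (3 * t).+1 v.+1]|).
    by rewrite cards2 -(inj_eq val_inj) !val_inord //=; lia.
  apply: subset_leq_card; apply/subsetP => u; rewrite !inE => /orP [] /eqP ->;
    rewrite /ex_adj /ex_step val_inord //; lia.
have [w v_nbr] : exists w : 'I_(3 * t).+2, forall u, ex_adj v u -> u = w.
  case: (posnP v) => v0.
    exists (inord 1) => u; rewrite /ex_adj /ex_step v0 => vu; apply: val_inj.
    by rewrite val_inord /=; lia.
  exists (inord (3 * t)) => u; rewrite /ex_adj /ex_step => vu; apply: val_inj.
  by have := ltn_ord u; rewrite val_inord /=; lia.
apply/negbTE; rewrite -ltnNge ltnS -[X in _ <= X](cards1 w); apply: subset_leq_card.
by apply/subsetP => u; rewrite !inE => /v_nbr ->.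
Qed.

Lemma ex_n2 : n2 ex_adj = 3 * t.
Proof.
rewrite /n2; have -> : [set v | 2 <= #|[set u | ex_adj v u]|] = [set inord (val j).+1 | j in 'I_(3 * t)].
  apply/setP => v; rewrite inE ex_deg2; apply/idP/imsetP => [v_mid|[j _ ->]].
    have v_lt : v.-1 < 3 * t by lia.
    by exists (Ordinal v_lt) => //; apply: val_inj; rewrite val_inord; simpl; lia.
  by have jt := ltn_ord j; rewrite val_inord; simpl; lia.
rewrite card_imset ?card_ord // => j j' /(congr1 val).
have jt := ltn_ord j; have j't := ltn_ord j'.
by rewrite !val_inord; simpl; try lia; move/succn_inj/val_inj.
Qed.

Definition weight (v : nat) := v - v %/ 3.

Lemma ex_adj_weight x y : ex_adj x y -> weight y <= weight x + 1.
Proof.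
by rewrite /ex_adj /ex_step /weight => /orP [] /orP [/eqP <- | /andP [/eqP r /eqP ->]]; lia.
Qed.

Local Notation LV := (line_vertex ex_adj).

Definition edge_weight (A : LV) := \sum_(x in val A) weight x.

Lemma edge_weight_set2 (A : LV) z w : z != w -> val A = [set z; w] ->
  edge_weight A = weight z + weight w.
Proof. by move=> zw eA; rewrite /edge_weight eA big_setU1 ?big_set1 ?inE. Qed.

Lemma edge_weight_edge_vertex x y (exy : ex_adj x y) :
  edge_weight (edge_vertex exy) = weight x + weight y.
Proof. by apply: edge_weight_set2 => //; apply: contraTneq exy => ->; rewrite ex_adj_irr. Qed.

Lemma edge_weight_adj (A B : LV) : line_adj ex_adj A B -> edge_weight B <= edge_weight A + 2.
Proof.
move=> /line_adjP [_ [z zA zB]].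
have [a az eA] := line_vertex_other ex_adj_irr zA.
have [b bz eB] := line_vertex_other ex_adj_irr zB.
have aA : a \in val A by rewrite eA set22.
have bB : b \in val B by rewrite eB set22.
have := ex_adj_weight (line_vertex_edge ex_adj_sym ex_adj_irr aA zA az).
have := ex_adj_weight (line_vertex_edge ex_adj_sym ex_adj_irr zB bB (_ : z != b)).
rewrite (edge_weight_set2 _ eA) ?(edge_weight_set2 _ eB) 1?eq_sym //; lia.
Qed.

Lemma edge_weight_path (A : LV) p : path (line_adj ex_adj) A p ->
  edge_weight (last A p) <= edge_weight A + 2 * size p.
Proof.
elim: p A => [|B p IH] A /=; first by rewrite addn0.
move=> /andP [AB Bp]; apply: leq_trans (IH B Bp) _.
by rewrite mulnS addnA leq_add2r edge_weight_adj.
Qed.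

Lemma ex_rc_with_ge K : rc_with (line_adj ex_adj) K -> 2 * t <= K.
Proof.
move=> [c [c_col c_rainbow]].
have first_edge : ex_adj (inord 0) (inord 1) by rewrite /ex_adj /ex_step !val_inord.
have last_edge : ex_adj (inord (3 * t)) (inord (3 * t).+1).
  by rewrite /ex_adj /ex_step !val_inord ?eqxx.
have [p p_rainbow] := c_rainbow (edge_vertex first_edge) (edge_vertex last_edge).
have := rainbow_path_size c_col p_rainbow; case: p_rainbow => p_path p_last _ _.
have := edge_weight_path p_path; rewrite p_last.
rewrite !edge_weight_edge_vertex !val_inord // /weight; lia.
Qed.

End Example.

Theorem corollary3p2 :
  (forall (T : finType) (e : rel T) (t : nat) (tr : 'I_t -> {set T}),
      symmetric e -> irreflexive e -> connected_graph e ->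
      disjoint_triangles e tr ->
      rc (line_adj e) <= n2 e - t)
  /\
  (forall t : nat, 0 < t ->
      exists (T : finType) (e : rel T) (tr : 'I_t -> {set T}),
        [/\ symmetric e, irreflexive e, connected_graph e,
            disjoint_triangles e tr &
            rc (line_adj e) = n2 e - t]).
Proof.
have upper T e t (tr : 'I_t -> {set T}) : symmetric e -> irreflexive e ->
    connected_graph e -> disjoint_triangles e tr -> rc (line_adj e) <= n2 e - t.
  move=> e_sym e_irr conn tr_disj; apply: leq_trans (card_palette tr_disj).
  exact/rc_leq/(rc_with_palette e_sym e_irr tr_disj conn).
split=> [|t _]; first exact: upper.
have sym := @ex_adj_sym t; have irr := @ex_adj_irr t.
have conn := @ex_adj_connected t; have tri := @ex_triangles t.
exists _, (@ex_adj t), (@ex_tr t); split=> //.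
apply/eqP; rewrite eqn_leq (upper _ _ _ _ sym irr conn tri) ex_n2 (_ : 3 * t - t = 2 * t); last lia.
apply: (rc_geq _ (@ex_rc_with_ge t)).
by exists #|palette (@ex_adj t) (@ex_tr t)|; apply: rc_with_palette.
Qed.
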